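(* Fix $0<p<1$ and $\lambda>0$, and for each $n$ let $\Delta=\Delta(n)=\frac{-\ln\left(1-\sqrt[n]{p}\right)}{\lambda}$. Then the expected response time of the protocol $\mathrm{CORE}(\Delta)$ in the $\mathrm{EDD}(\lambda)$ model with a global clock satisfies $\mathbb{E}[RT]\in O\!\left(\frac{\log n}{\lambda}\right)$ as $n\to\infty$.
   Context: Agents $i_0,i_1,\ldots,i_n$ share an accurate global clock and are connected by a complete reliable network; the delay of each message is an independent exponential random variable with parameter $\lambda$. At time $0$ the supervisor $i_0$ receives an external input. Protocol $\mathrm{CORE}(\Delta)$: at time $0$, $i_0$ sends a ''trigger'' message to each of $i_1,\ldots,i_n$; upon receiving the trigger, agent $i_k$ waits until the global time is at least $\Delta$ and then performs its action $\alpha_k$ (acting immediately if the trigger arrives after time $\Delta$). With $t_k$ the time at which $i_k$ performs $\alpha_k$, the response time is $RT=\max\{t_1,\ldots,t_n\}$. *)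

From HB Require Import structures.
From mathcomp Require Import all_boot all_order all_algebra.
From mathcomp Require Import all_classical all_reals all_analysis.
Set Implicit Arguments. Unset Strict Implicit. Unset Printing Implicit Defensive.
Import Order.TTheory GRing.Theory Num.Theory.
Local Open Scope classical_set_scope.
Local Open Scope ring_scope.

Definition is_exponential {d} {T : measurableType d} {R : realType}
  (P : probability T R) (lam : R) (X : {RV P >-> R}) : Prop :=
  forall A : set R, measurable A -> P (X @^-1` A) = exponential_prob lam A.

Definition mutually_independent {d} {T : measurableType d} {R : realType}
  (P : probability T R) (n : nat) (X : 'I_n -> {RV P >-> R}) : Prop :=
  forall B : 'I_n -> set R, (forall i, measurable (B i)) ->
    P (\bigcap_(i in [set: 'I_n]) (X i @^-1` B i)) =
    (\prod_(i < n) P (X i @^-1` B i))%E.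

Definition core_delta {R : realType} (p lam : R) (n : nat) : R :=
  - ln (1 - p `^ (n%:R)^-1) / lam.

(* Action time of agent k under CORE(Delta): trigger arrives at time D k,
   agent acts at max(Delta, D k). *)
Definition action_time {d} {T : measurableType d} {R : realType}
  (P : probability T R) (n : nat) (Delta : R) (D : 'I_n -> {RV P >-> R})
  (k : 'I_n) : T -> R :=
  fun w => Num.max Delta (D k w).

(* Response time RT = max_k t_k (all t_k >= 0 for Delta >= 0). *)
Definition response_time {d} {T : measurableType d} {R : realType}
  (P : probability T R) (n : nat) (Delta : R) (D : 'I_n -> {RV P >-> R}) :
  T -> R :=
  fun w => \big[Num.max/0]_(k < n) action_time Delta D k w.

Arguments is_exponential {d T R} P lam X.
Arguments mutually_independent {d T R} P {n} X.
Arguments response_time {d T R P n} Delta D _.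

From HB Require Import structures.
From mathcomp Require Import all_boot all_order all_algebra.
From mathcomp Require Import all_classical all_reals all_analysis.
From mathcomp Require Import ring lra.
Import Order.TTheory GRing.Theory Num.Theory.
Local Open Scope classical_set_scope.
Local Open Scope ring_scope.

(* Agent k acts at max(Delta, D k), so for x >= Delta the response time exceeds
   x only if some delay does: by the union bound P(RT > x) <= n e^(-lam x), and
   integrating this tail from M = Delta + ln n / lam gives
   E[RT] <= Delta + (ln n + 1) / lam.  Finally 1 - e^(-y) >= y / (1 + y) with
   y = -ln p / n yields lam Delta <= ln n + ln (1 + 1 / (-ln p)). *)

Lemma exponential_prob_itvoy {R : realType} (lam r : R) : 0 < lam -> 0 < r ->
  exponential_prob lam `]r, +oo[ = (expR (- lam * r))%:E.
Proof.
move=> lam_gt0 r_gt0.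
have neg0 : exponential_prob lam `]-oo, 0[ = 0%E.
  rewrite /exponential_prob integral0_eq// => x /=.
  by rewrite in_itv/= => /lt0_exponential_pdf ->.
rewrite -setCitvl probability_setC//.
rewrite (@itv_bndbnd_setU _ _ _ (BLeft 0)) ?bnd_simp ?(ltW r_gt0)// measureU//=; last first.
  by rewrite -subset0 => x []; rewrite /= !in_itv/= => x_lt0 /andP[x_ge0 _]; lra.
rewrite neg0 add0e exponential_prob_itv0c//.
by rewrite -[1%E]/(1%:E) -!EFinB subKr.
Qed.

Section expectation_light_tail.
Context {d} {T : measurableType d} {R : realType} (P : probability T R).
Local Open Scope ereal_scope.

Lemma ge0_expectation_le_exp_tail (X : {RV P >-> R}) (M c lam : R) :
  (forall w, (0 <= X w)%R) -> (0 < M)%R -> (0 < lam)%R -> (0 <= c)%R ->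
  (forall x, (M < x)%R -> ccdf X x <= (c * expR (- lam * x))%:E) ->
  'E_P[X] <= (M + c / lam * expR (- lam * M))%:E.
Proof.
move=> X_ge0 M_gt0 lam_gt0 c_ge0 tail.
have mccdf := measurable_funS measurableT (subsetT _) (ccdf_measurable X).
rewrite ge0_expectation_ccdf// (@itv_bndbnd_setU _ _ _ (BRight M)) ?bnd_simp ?(ltW M_gt0)//.
rewrite integral_setU//=; last 2 first.
- exact: mccdf.
- by apply/disj_setPS => x []; rewrite /= !in_itv/= => /andP[_ ?] /andP[? _]; lra.
rewrite EFinD; apply: leeD.
  apply: (@le_trans _ _ (\int[lebesgue_measure]_(x in `[0%R, M]) 1)).
    apply: ge0_le_integral => //; first exact: mccdf.
    by move=> x _; exact: probability_le1.
  rewrite integral_cst// mul1e le_eqVlt; apply/predU1P; left.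
  by have := lebesgue_measure_itv `[0%R, M]; rewrite /= lte_fin M_gt0 sube0.
have pdf_tail x : (M < x)%R ->
    (c * expR (- lam * x) = c / lam * exponential_pdf lam x)%R.
  move=> Mx; rewrite exponential_pdfE /=; last exact/ltW/(lt_trans M_gt0 Mx).
  by rewrite mulrA divfK ?gt_eqF.
apply: (@le_trans _ _ (\int[lebesgue_measure]_(x in `]M, +oo[)
    (c / lam * exponential_pdf lam x)%:E)).
  apply: ge0_le_integral => //.
  - exact: mccdf.
  - apply/measurable_realfun.measurable_EFinP/measurable_realfun.measurable_funM => //.
    exact: measurable_funS measurableT (subsetT _) (measurable_exponential_pdf lam).
  - by move=> x; rewrite /= in_itv/= andbT => Mx; rewrite -pdf_tail// tail.
under eq_integral do rewrite EFinM.
rewrite ge0_integralZl//; last 3 first.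
- apply/measurable_realfun.measurable_EFinP.
  exact: measurable_funS measurableT (subsetT _) (measurable_exponential_pdf lam).
- by move=> x _; rewrite lee_fin exponential_pdf_ge0// (ltW lam_gt0).
- by rewrite lee_fin divr_ge0// (ltW lam_gt0).
by rewrite -/(exponential_prob lam _) exponential_prob_itvoy// EFinM.
Qed.

End expectation_light_tail.

Lemma expRN_le_inv1D {R : realType} (y : R) : 0 <= y -> expR (- y) <= (1 + y)^-1.
Proof.
move=> y_ge0; rewrite expRN lef_pV2 ?posrE ?expR_gt0 ?expR_ge1Dx//.
by rewrite ltr_pwDl.
Qed.

Lemma lnN_1BexpRN_le {R : realType} (y : R) : 0 < y ->
  - ln (1 - expR (- y)) <= ln (1 + y^-1).
Proof.
move=> y_gt0; have y1_gt0 : 0 < 1 + y by rewrite addr_gt0.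
have frac_gt0 : 0 < y / (1 + y) by rewrite divr_gt0.
have lower : y / (1 + y) <= 1 - expR (- y).
  have -> : y / (1 + y) = 1 - (1 + y)^-1 by field; rewrite gt_eqF.
  by rewrite lerD2l lerN2 expRN_le_inv1D// (ltW y_gt0).
have -> : 1 + y^-1 = (y / (1 + y))^-1 by rewrite invf_div; field; rewrite gt_eqF.
have lower_gt0 : 0 < 1 - expR (- y) by exact: lt_le_trans lower.
by rewrite -lnV ?posrE// ler_ln ?posrE ?invr_gt0// lef_pV2 ?posrE.
Qed.

Lemma core_delta_ge0 {R : realType} (p lam : R) (n : nat) : 0 <= lam ->
  0 <= core_delta p lam n.
Proof.
move=> lam_ge0; rewrite /core_delta divr_ge0// oppr_ge0 ln_le0//.
by rewrite gerBl powR_ge0.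
Qed.

Lemma core_delta_le {R : realType} (p lam : R) (n : nat) :
  0 < p -> p < 1 -> 0 < lam -> (0 < n)%N ->
  core_delta p lam n <= (ln n%:R + ln (1 + (- ln p)^-1)) / lam.
Proof.
move=> p_gt0 p_lt1 lam_gt0 n_gt0.
have a_gt0 : 0 < - ln p by rewrite oppr_gt0 ln_lt0// p_gt0.
have n_ge1 : (1 : R) <= n%:R by rewrite ler1n.
have nR_gt0 : (0 : R) < n%:R by rewrite ltr0n.
have p_root : p `^ (n%:R)^-1 = expR (- (- ln p / n%:R)).
  by rewrite /powR gt_eqF// mulNr opprK mulrC.
rewrite /core_delta p_root ler_pM2r ?invr_gt0//.
apply: le_trans (lnN_1BexpRN_le _ _) _; first by rewrite divr_gt0.
rewrite invf_div -lnM ?posrE ?addr_gt0 ?invr_gt0//.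
rewrite ler_ln ?posrE ?mulr_gt0 ?addr_gt0 ?divr_gt0 ?invr_gt0//.
by rewrite mulrDr mulr1 lerD2r.
Qed.

Section content_bigsetU.
Context {d} {T : ringOfSetsType d} {R : realFieldType}.
Variable mu : {content set T -> \bar R}.

Lemma le_mu_bigsetU_seq {I : Type} (s : seq I) (A : I -> set T) :
  (forall i, measurable (A i)) ->
  (mu (\big[setU/set0]_(i <- s) A i) <= \sum_(i <- s) mu (A i))%E.
Proof.
move=> mA; elim: s => [|i s IH]; first by rewrite !big_nil measure0.
rewrite !big_cons; apply: le_trans (leeD2l _ IH).
by apply: measureU2 => //; exact: bigsetU_measurable.
Qed.

End content_bigsetU.

Lemma measurable_fun_bigmaxr {d} {T : measurableType d} {R : realType}
    {I : Type} (s : seq I) (x0 : R) (f : I -> T -> R) :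
  (forall i, measurable_fun setT (f i)) ->
  measurable_fun setT (fun w => \big[Num.max/x0]_(i <- s) f i w).
Proof.
move=> mf; elim: s => [|i s IH].
  by under eq_fun do rewrite big_nil; exact: measurable_cst.
under eq_fun do rewrite big_cons.
exact: measurable_realfun.measurable_maxr.
Qed.

Section response_time.
Context {d} {T : measurableType d} {R : realType} (P : probability T R).
Context (n : nat) (Delta : R) (D : 'I_n -> {RV P >-> R}).

Lemma measurable_response_time : measurable_fun setT (response_time Delta D).
Proof.
apply: measurable_fun_bigmaxr => k.
exact: measurable_realfun.measurable_maxr (measurable_cst Delta) (measurable_funP (D k)).
Qed.

HB.instance Definition _ :=
  isMeasurableFun.Build _ _ T R (response_time Delta D) measurable_response_time.

Lemma response_time_ge0 w : 0 <= response_time Delta D w.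
Proof. by apply/bigmax_geP; left. Qed.

Lemma response_time_gt_delay x w : 0 <= x -> Delta <= x ->
  x < response_time Delta D w -> exists k, x < D k w.
Proof.
move=> x_ge0 Delta_le_x /bigmax_gtP[|[k _]]; first by rewrite ltNge x_ge0.
by rewrite /action_time lt_max ltNge Delta_le_x => xDk; exists k.
Qed.

Lemma response_time_ccdf_le (lam x : R) :
  0 < lam -> (forall k, is_exponential P lam (D k)) -> 0 < x -> Delta <= x ->
  (ccdf (P := P) (response_time Delta D) x <= (n%:R * expR (- lam * x))%:E)%E.
Proof.
move=> lam_gt0 expD x_gt0 Delta_le_x.
have tail k : P (D k @^-1` `]x, +oo[) = (expR (- lam * x))%:E.
  by rewrite expD// exponential_prob_itvoy.
have -> : ccdf (P := P) (response_time Delta D) x =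
  P (response_time Delta D @^-1` `]x, +oo[) by [].
have mD k : measurable (D k @^-1` `]x, +oo[) by exact: measurable_funPTI.
apply: (@le_trans _ _ (P (\big[setU/set0]_(k < n) D k @^-1` `]x, +oo[))).
  apply: le_measure; rewrite ?inE.
  - exact: measurable_funPTI.
  - by apply: bigsetU_measurable => k _; exact: mD.
  move=> w /=; rewrite in_itv/= andbT.
  move=> /(response_time_gt_delay _ _ (ltW x_gt0) Delta_le_x)[k xk].
  by rewrite -bigcup_seq; exists k; rewrite /= ?mem_index_enum ?in_itv/= ?xk.
apply: le_trans (le_mu_bigsetU_seq P _ _ mD) _.
by rewrite (eq_bigr _ (fun k _ => tail k)) sumEFin sumr_const card_ord mulr_natl.
Qed.

Lemma expectation_response_time_le (lam : R) :
  0 < lam -> (1 < n)%N -> 0 <= Delta -> (forall k, is_exponential P lam (D k)) ->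
  ('E_P[response_time Delta D] <= (Delta + (ln n%:R + 1) / lam)%:E)%E.
Proof.
move=> lam_gt0 n_gt1 Delta_ge0 expD.
have nR_gt0 : (0 : R) < n%:R by rewrite ltr0n ltnW.
have ln_n_gt0 : 0 < ln (n%:R : R) by rewrite ln_gt0// ltr1n.
pose M := Delta + ln n%:R / lam.
have M_gt0 : 0 < M by rewrite ltr_wpDl// divr_gt0.
apply: le_trans (ge0_expectation_le_exp_tail P _ _ _ _
  response_time_ge0 M_gt0 lam_gt0 (ler0n _ n) _) _.
  move=> x Mx; apply: response_time_ccdf_le => //; first exact: lt_trans Mx.
  by apply: le_trans (ltW Mx); rewrite lerDl; apply/ltW/divr_gt0.
have tail_at_M : expR (- lam * M) = expR (- lam * Delta) / n%:R.
  rewrite mulrDr expRD; congr (_ * _).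
  by rewrite mulNr mulrC divfK ?gt_eqF// expRN lnK// posrE.
rewrite lee_fin /M -addrA lerD2l mulrDl lerD2l tail_at_M.
have -> : n%:R / lam * (expR (- lam * Delta) / n%:R) = expR (- lam * Delta) / lam.
  by field; rewrite !gt_eqF.
apply: ler_wpM2r; first by rewrite invr_ge0 (ltW lam_gt0).
by rewrite expR_le1 mulNr oppr_le0 mulr_ge0// (ltW lam_gt0).
Qed.

End response_time.

Theorem theorem3 (R : realType) (p lam : R) (hp0 : 0 < p) (hp1 : p < 1)
  (hlam : 0 < lam) :
  exists (C : R) (N : nat), 0 < C /\
    forall n : nat, (N <= n)%N ->
    forall (d : measure_display) (T : measurableType d)
      (P : probability T R) (D : 'I_n -> {RV P >-> R}),
      (forall k, is_exponential P lam (D k)) ->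
      mutually_independent P D ->
      ('E_P[response_time (core_delta p lam n) D]
         <= (C * (ln (n%:R) / lam))%:E)%E.
Proof.
have a_gt0 : 0 < - ln p by rewrite oppr_gt0 ln_lt0// hp0.
pose K := ln (1 + (- ln p)^-1) + 1.
have K_gt0 : 0 < K by rewrite ltr_wpDl// ln_ge0// lerDl invr_ge0 (ltW a_gt0).
have ln2_gt0 : 0 < ln (2 : R) by rewrite ln_gt0// ltr1n.
exists (2 + K / ln 2), 2%N; split; first by rewrite addr_gt0// divr_gt0.
move=> n n_ge2 d T P D expD _.
have n_gt0 : (0 < n)%N := ltnW n_ge2.
have Delta_le := core_delta_le _ _ _ hp0 hp1 hlam n_gt0.
have ln_n_ge : ln 2 <= ln (n%:R : R) by rewrite ler_ln ?posrE ?ltr0n ?ler_nat.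
apply: le_trans (expectation_response_time_le P n _ D lam hlam n_ge2
  (core_delta_ge0 p lam n (ltW hlam)) expD) _.
rewrite lee_fin; apply: (@le_trans _ _ ((2 * ln n%:R + K) / lam)).
  apply: le_trans (lerD Delta_le (lexx _)) _.
  by rewrite -mulrDl ler_pM2r ?invr_gt0// /K; lra.
have K_le : K <= K / ln 2 * ln n%:R.
  rewrite -mulrA ler_peMr ?(ltW K_gt0)//.
  by rewrite mulrC ler_pdivlMr// mul1r.
by rewrite mulrA ler_pM2r ?invr_gt0// mulrDl; lra.
Qed.
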